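(* Let $\mathcal{T}\mathcal{E}$ be the tangent equation of $u_{tx}=2u_yu_{xx}+4u_xu_{xy}-u_{xxxy}$, i.e. the system consisting of this equation together with $q_{tx}=2u_yq_{xx}+2u_{xx}q_y+4u_xq_{xy}+4u_{xy}q_x-q_{xxxy}$, where $q$ and its derivatives are odd (anticommuting) variables. Then the system $$w_x=2u_xq_x,\qquad w_y=q_t+q_{xxy}-2u_xq_y-2u_yq_x,$$ with $w$ odd, is compatible on $\mathcal{T}\mathcal{E}$ and thus defines a covering $\tau\colon W\to\mathcal{T}\mathcal{E}$; moreover, for every $\mu\in\mathbb{R}$, setting $\gamma=1-\mu t$, the function $$S^u=(2\gamma u_x-\mu y)q-\gamma q_{xx}+\gamma w$$ is a symmetry shadow in the composition $\mathbf{t}\circ\tau\colon W\to\mathcal{E}$, i.e. it satisfies $D_xD_tS^u-2u_{xx}D_yS^u-2u_yD_x^2S^u-4u_{xy}D_xS^u-4u_xD_xD_yS^u+D_x^3D_yS^u=0$ with total derivatives lifted to $W$.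
   Context: $\mathbf{t}\colon\mathcal{T}\mathcal{E}\to\mathcal{E}$ is the tangent covering $(u_\sigma,q_\sigma)\mapsto u_\sigma$. A covering over an equation is given by additional (nonlocal) variables with derivatives prescribed by a system whose compatibility conditions hold by virtue of the equation; total derivatives are extended accordingly (e.g. $D_x(w)=2u_xq_x$). A shadow in a covering is a solution of the lifted linearized equation. *)

From HB Require Import structures.
From mathcomp Require Import all_boot all_order all_algebra.
From mathcomp Require Import reals.
Set Implicit Arguments. Unset Strict Implicit. Unset Printing Implicit Defensive.
Import GRing.Theory.
Local Open Scope ring_scope.

(* A   : the (commutative) algebra of even functions, over the reals R.
   M   : an A-module carrying the odd functions; all expressions in the
         statement are linear in the odd variables q, w, so the odd part
         enters only as a module over the even part.
   Dt Dx Dy : even total derivatives acting on A;  Et Ex Ey : the same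
   total derivatives acting on the odd part M. *)

Definition derivation (R : realType) (A : comAlgType R) (D : A -> A) : Prop :=
  (forall a b : A, D (a + b) = D a + D b) /\
  (forall (c : R) (a : A), D (c *: a) = c *: D a) /\
  (forall a b : A, D (a * b) = D a * b + a * D b).

Definition mod_derivation (R : realType) (A : comAlgType R) (M : lmodType A)
    (D : A -> A) (E : M -> M) : Prop :=
  (forall m n : M, E (m + n) = E m + E n) /\
  (forall (a : A) (m : M), E (a *: m) = D a *: m + a *: E m).

Definition commuting (T : Type) (F G : T -> T) : Prop := forall x, F (G x) = G (F x).

Definition total_derivations (R : realType) (A : comAlgType R) (M : lmodType A)
    (Dt Dx Dy : A -> A) (Et Ex Ey : M -> M) : Prop :=
  [/\ derivation Dt, derivation Dx & derivation Dy] /\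
  [/\ mod_derivation Dt Et, mod_derivation Dx Ex & mod_derivation Dy Ey] /\
  [/\ commuting Dt Dx, commuting Dt Dy & commuting Dx Dy] /\
  [/\ commuting Et Ex, commuting Et Ey & commuting Ex Ey].

Definition equationE (R : realType) (A : comAlgType R) (Dt Dx Dy : A -> A) (u : A) : Prop :=
  Dx (Dt u) = 2 * Dy u * Dx (Dx u) + 4 * Dx u * Dx (Dy u) - Dx (Dx (Dx (Dy u))).

Definition equationTE (R : realType) (A : comAlgType R) (M : lmodType A)
    (Dt Dx Dy : A -> A) (Et Ex Ey : M -> M) (u : A) (q : M) : Prop :=
  Ex (Et q) = (2 * Dy u) *: Ex (Ex q) + (2 * Dx (Dx u)) *: Ey q
              + (4 * Dx u) *: Ex (Ey q) + (4 * Dx (Dy u)) *: Ex q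
              - Ex (Ex (Ex (Ey q))).

Definition cov_x (R : realType) (A : comAlgType R) (M : lmodType A)
    (Dx : A -> A) (Ex : M -> M) (u : A) (q : M) : M :=
  (2 * Dx u) *: Ex q.

Definition cov_y (R : realType) (A : comAlgType R) (M : lmodType A)
    (Dx Dy : A -> A) (Et Ex Ey : M -> M) (u : A) (q : M) : M :=
  Et q + Ex (Ex (Ey q)) - (2 * Dx u) *: Ey q - (2 * Dy u) *: Ex q.

Definition lin_E (R : realType) (A : comAlgType R) (M : lmodType A)
    (Dx Dy : A -> A) (Et Ex Ey : M -> M) (u : A) (S : M) : M :=
  Ex (Et S) - (2 * Dx (Dx u)) *: Ey S - (2 * Dy u) *: Ex (Ex S)
  - (4 * Dx (Dy u)) *: Ex S - (4 * Dx u) *: Ex (Ey S) + Ex (Ex (Ex (Ey S))).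

Definition shadowSu (R : realType) (A : comAlgType R) (M : lmodType A)
    (Dx : A -> A) (Ex : M -> M) (mu : R) (t y u : A) (q w : M) : M :=
  let gamma := 1 - mu *: t in
  (2 * gamma * Dx u - mu *: y) *: q - gamma *: Ex (Ex q) + gamma *: w.

From HB Require Import structures.
From mathcomp Require Import all_boot all_order all_algebra.
From mathcomp Require Import reals.
From mathcomp Require Import ring.
Import GRing.Theory.
Local Open Scope ring_scope.
Set Implicit Arguments. Unset Strict Implicit.

(* The odd variables enter every expression linearly, so we compute in the
   idealization A (+) M, the commutative ring in which M is an ideal of square
   zero.  The total derivations lift to commuting ring derivations of it, and
   every claim becomes an identity between differential polynomials in a
   commutative ring with commuting derivations Dt, Dx, Dy.
   There D_y(w_x) - D_x(w_y) is exactly minus the linearized operator l applied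
   to q, which gives compatibility.  For the shadow write S^u = gamma s - mu y q
   with s = 2u_x q - q_xx + w.  A factor f with D_x f = 0 passes through l up to
   the terms (D_t f) D_x and (D_y f) (D_x^3 - 2u_xx - 4u_x D_x); as gamma depends
   only on t and y only on y,
     l(S^u) = gamma l(s) - mu y l(q) - mu (s_x + q_xxx - 2u_xx q - 4u_x q_x),
   and the bracket vanishes because w_x = 2u_x q_x.  Finally l(s) = 0 is a
   direct computation from both equations of TE and their differential
   consequences. *)

Definition ring_derivation (B : pzRingType) (D : B -> B) : Prop :=
  {morph D : a b / a + b} /\ forall a b, D (a * b) = D a * b + a * D b.

Section RingDerivation.
Variables (B : pzRingType) (D : B -> B).
Hypothesis HD : ring_derivation D.

Lemma derD a b : D (a + b) = D a + D b. Proof. by case: HD. Qed.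
Lemma derM a b : D (a * b) = D a * b + a * D b. Proof. by case: HD. Qed.
Lemma der0 : D 0 = 0.
Proof. by apply: (@addrI _ (D 0)); rewrite -derD !addr0. Qed.
Lemma derN a : D (- a) = - D a.
Proof. by apply/eqP; rewrite -subr_eq0 opprK -derD addNr der0. Qed.
Lemma der1 : D 1 = 0.
Proof. by have /eqP := derM 1 1; rewrite !mulr1 mul1r eq_sym -subr_eq0 addrK => /eqP. Qed.
Lemma dern n : D n%:R = 0.
Proof. by elim: n => [|n IHn]; rewrite ?der0 // -natr1 derD IHn der1 addr0. Qed.
End RingDerivation.

Section Computation.
Variables (B : comPzRingType) (Dt Dx Dy : B -> B).
Hypotheses (HDt : ring_derivation Dt) (HDx : ring_derivation Dx)
  (HDy : ring_derivation Dy).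
Hypotheses (cTX : commuting Dt Dx) (cXY : commuting Dx Dy).

Definition solE (u : B) : Prop :=
  Dx (Dt u) = 2 * Dy u * Dx (Dx u) + 4 * Dx u * Dx (Dy u) - Dx (Dx (Dx (Dy u))).

Definition linE (u s : B) : B :=
  Dx (Dt s) - 2 * Dx (Dx u) * Dy s - 2 * Dy u * Dx (Dx s)
  - 4 * Dx (Dy u) * Dx s - 4 * Dx u * Dx (Dy s) + Dx (Dx (Dx (Dy s))).

Definition covX (u q : B) : B := 2 * Dx u * Dx q.

Definition covY (u q : B) : B :=
  Dt q + Dx (Dx (Dy q)) - 2 * Dx u * Dy q - 2 * Dy u * Dx q.

Lemma linE_eq0_DxDt u q : linE u q = 0 ->
  Dx (Dt q) = 2 * Dx (Dx u) * Dy q + 2 * Dy u * Dx (Dx q)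
              + 4 * Dx (Dy u) * Dx q + 4 * Dx u * Dx (Dy q) - Dx (Dx (Dx (Dy q))).
Proof. by move=> Hq; apply/eqP; rewrite -subr_eq0 -Hq /linE; apply/eqP; ring. Qed.

Ltac der_expand D := rewrite ?(dern D, der1 D, der0 D, derD D, derN D, derM D).

Ltac der_normal :=
  repeat progress (der_expand HDt; der_expand HDx; der_expand HDy;
                   rewrite ?cTX -?cXY).

Lemma linEB u s1 s2 : linE u (s1 - s2) = linE u s1 - linE u s2.
Proof. by rewrite /linE; der_normal; ring. Qed.

Lemma covering_defect u q : Dy (covX u q) - Dx (covY u q) = - linE u q.
Proof. by rewrite /covX /covY /linE; der_normal; ring. Qed.

Lemma covering_compatible u q : linE u q = 0 -> Dy (covX u q) = Dx (covY u q).
Proof. by move=> Hq; apply/eqP; rewrite -subr_eq0 covering_defect Hq oppr0. Qed.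

Lemma linE_mul_x_invariant u f s : Dx f = 0 ->
  linE u (f * s) = f * linE u s + Dt f * Dx s
    + Dy f * (Dx (Dx (Dx s)) - 2 * Dx (Dx u) * s - 4 * Dx u * Dx s).
Proof.
move=> Hf; have Htf : Dx (Dt f) = 0 by rewrite -cTX Hf der0.
have Hyf : Dx (Dy f) = 0 by rewrite cXY Hf der0.
rewrite /linE; repeat progress (der_normal; rewrite ?(Hf, Htf, Hyf)).
ring.
Qed.

(* [2 u_x q - q_xx + w = (2 u_x - D_x^2 + D_x^-1 2 u_x D_x) q], by [w_x = 2 u_x q_x]. *)
Lemma recursion_shadow u q w :
  solE u -> linE u q = 0 -> Dx w = covX u q -> Dy w = covY u q ->
  linE u (2 * Dx u * q - Dx (Dx q) + w) = 0.
Proof.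
move=> Hu /linE_eq0_DxDt Hq Hwx Hwy.
have Hwt : Dx (Dt w) = Dt (covX u q) by rewrite -cTX Hwx.
rewrite /covX /covY in Hwx Hwy Hwt; rewrite /linE.
repeat progress (der_normal; rewrite ?(Hwt, Hwx, Hwy, Hu, Hq)).
ring.
Qed.

Lemma shadow_Su u q w (c t y : B) :
  Dt c = 0 -> Dx c = 0 -> Dy c = 0 ->
  Dt t = 1 -> Dx t = 0 -> Dy t = 0 -> Dt y = 0 -> Dx y = 0 -> Dy y = 1 ->
  solE u -> linE u q = 0 -> Dx w = covX u q -> Dy w = covY u q ->
  let g := 1 - c * t in
  linE u ((2 * g * Dx u - c * y) * q - g * Dx (Dx q) + g * w) = 0.
Proof.
move=> Htc Hxc Hyc Htt Hxt Hyt Hty Hxy Hyy Hu Hq Hwx Hwy g.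
set s := 2 * Dx u * q - Dx (Dx q) + w.
have -> : (2 * g * Dx u - c * y) * q - g * Dx (Dx q) + g * w = g * s - c * y * q.
  by rewrite /s; ring.
have Hs : linE u s = 0 by apply: recursion_shadow.
have Hsx : Dx s = 2 * Dx (Dx u) * q + 4 * Dx u * Dx q - Dx (Dx (Dx q)).
  by rewrite /s; der_normal; rewrite Hwx /covX; ring.
have Hxg : Dx g = 0 by rewrite /g; der_normal; rewrite Hxc Hxt; ring.
have Hxcy : Dx (c * y) = 0 by der_normal; rewrite Hxc Hxy; ring.
rewrite linEB !linE_mul_x_invariant // Hs Hq Hsx /g; der_normal.
by rewrite Htc Hyc Htt Hyt Hty Hyy; ring.
Qed.

End Computation.

Section Idealization.
Variables (A : comPzRingType) (M : lmodType A).

Definition idealization := (A * M)%type.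
HB.instance Definition _ := GRing.Zmodule.on idealization.

Definition idealization_mul (x y : idealization) : idealization :=
  (x.1 * y.1, x.1 *: y.2 + y.1 *: x.2).

Fact idealization_mulA : associative idealization_mul.
Proof.
move=> [a m] [b n] [c p]; congr (_, _); rewrite /= ?mulrA //.
by rewrite !scalerDr !scalerA addrA (mulrC c b) (mulrC c a).
Qed.

Fact idealization_mulC : commutative idealization_mul.
Proof. by move=> [a m] [b n]; congr (_, _); rewrite /= (mulrC, addrC). Qed.

Fact idealization_mul1 : left_id (1, 0) idealization_mul.
Proof. by move=> [a m]; congr (_, _); rewrite /= ?mul1r // scale1r scaler0 addr0. Qed.

Fact idealization_mulDl : left_distributive idealization_mul +%R.
Proof.
move=> [a m] [b n] [c p]; congr (_, _); rewrite /= ?mulrDl //.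
by rewrite scalerDl scalerDr addrACA.
Qed.

HB.instance Definition _ := GRing.Zmodule_isComPzRing.Build idealization
  idealization_mulA idealization_mulC idealization_mul1 idealization_mulDl.

Definition ofA (a : A) : idealization := (a, 0).
Definition ofM (m : M) : idealization := (0, m).

Lemma ofAD a b : ofA (a + b) = ofA a + ofA b.
Proof. by congr (_, _); rewrite addr0. Qed.
Lemma ofAN a : ofA (- a) = - ofA a.
Proof. by congr (_, _); rewrite oppr0. Qed.
Lemma ofAM a b : ofA (a * b) = ofA a * ofA b.
Proof. by congr (_, _); rewrite /= !scaler0 addr0. Qed.
Lemma ofA1 : ofA 1 = 1. Proof. by []. Qed.
Lemma ofAn n : ofA n%:R = n%:R.
Proof. by elim: n => // n IHn; rewrite -!natr1 ofAD IHn. Qed.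

Lemma ofMD m n : ofM (m + n) = ofM m + ofM n.
Proof. by congr (_, _); rewrite addr0. Qed.
Lemma ofMN m : ofM (- m) = - ofM m.
Proof. by congr (_, _); rewrite oppr0. Qed.

Lemma ofM_inj : injective ofM. Proof. by move=> m n []. Qed.

Lemma ofMZ a m : ofM (a *: m) = ofA a * ofM m.
Proof. by congr (_, _); rewrite /= ?mulr0 // scaler0 addr0. Qed.

End Idealization.
Arguments idealization : clear implicits.

Section Lift.
Variables (R : realType) (A : comAlgType R) (M : lmodType A).
Implicit Types (D : A -> A) (E : M -> M).

Lemma derivationW D : derivation D -> ring_derivation D.
Proof. by case=> HDadd [_ HDmul]; split. Qed.

Lemma derivation_scalar D (c : R) : derivation D -> D c%:A = 0.
Proof. by move=> HD; case: (HD) => _ [-> _]; rewrite (der1 (derivationW HD)) scaler0. Qed.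

Lemma mod_derivation0 D E : mod_derivation D E -> E 0 = 0.
Proof. by case=> _ HZ; rewrite -(scale0r 0) HZ !scale0r scaler0 addr0. Qed.

Definition lift_der D E (x : idealization A M) : idealization A M := (D x.1, E x.2).

Lemma lift_der_ofA D E a : mod_derivation D E -> lift_der D E (ofA M a) = ofA M (D a).
Proof. by move=> HE; rewrite /lift_der /= (mod_derivation0 HE). Qed.

Lemma lift_der_ofM D E m : derivation D -> lift_der D E (ofM m) = ofM (E m).
Proof. by move=> HD; rewrite /lift_der /= (der0 (derivationW HD)). Qed.

Lemma lift_derivation D E :
  derivation D -> mod_derivation D E -> ring_derivation (lift_der D E).
Proof.
move=> /derivationW HD [HEadd HEZ]; split=> [[a m] [b n]|[a m] [b n]].
  by congr (_, _); rewrite /= (derD HD, HEadd).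
congr (_, _); rewrite /= ?(derM HD) //.
by rewrite HEadd !HEZ -!addrA; congr (_ + _); rewrite [RHS]addrC -addrA.
Qed.

Lemma lift_commuting D D' E E' :
  commuting D D' -> commuting E E' -> commuting (lift_der D E) (lift_der D' E').
Proof. by move=> cD cE [a m]; rewrite /lift_der /= cD cE. Qed.

End Lift.

Section Tangent.
Variables (R : realType) (A : comAlgType R) (M : lmodType A).
Variables (Dt Dx Dy : A -> A) (Et Ex Ey : M -> M).
Hypotheses (HDt : derivation Dt) (HDx : derivation Dx) (HDy : derivation Dy).
Hypotheses (HEt : mod_derivation Dt Et) (HEx : mod_derivation Dx Ex)
  (HEy : mod_derivation Dy Ey).
Hypotheses (cTX : commuting Dt Dx) (cXY : commuting Dx Dy).
Hypotheses (mTX : commuting Et Ex) (mXY : commuting Ex Ey).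

Local Notation Lt := (lift_der Dt Et).
Local Notation Lx := (lift_der Dx Ex).
Local Notation Ly := (lift_der Dy Ey).
Local Notation ofA := (ofA M).

Ltac push_into_ideal :=
  rewrite ?(ofAn, ofA1, ofMD, ofMN, ofMZ, ofAD, ofAN, ofAM)
          ?(lift_der_ofA _ HEt, lift_der_ofA _ HEx, lift_der_ofA _ HEy,
            lift_der_ofM _ _ HDt, lift_der_ofM _ _ HDx, lift_der_ofM _ _ HDy).

Lemma lift_equationE u : equationE Dt Dx Dy u -> solE Lt Lx Ly (ofA u).
Proof. by move=> Hu; rewrite /solE; push_into_ideal; rewrite Hu; push_into_ideal. Qed.

Lemma ofM_lin_E u S :
  ofM (lin_E Dx Dy Et Ex Ey u S) = linE Lt Lx Ly (ofA u) (ofM S).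
Proof. by rewrite /lin_E /linE; push_into_ideal. Qed.

Lemma lift_equationTE u q :
  equationTE Dt Dx Dy Et Ex Ey u q -> linE Lt Lx Ly (ofA u) (ofM q) = 0.
Proof. by move=> Hq; rewrite -ofM_lin_E /lin_E Hq; push_into_ideal; ring. Qed.

Lemma ofM_cov_x u q : ofM (cov_x Dx Ex u q) = covX Lx (ofA u) (ofM q).
Proof. by rewrite /cov_x /covX; push_into_ideal. Qed.

Lemma ofM_cov_y u q :
  ofM (cov_y Dx Dy Et Ex Ey u q) = covY Lt Lx Ly (ofA u) (ofM q).
Proof. by rewrite /cov_y /covY; push_into_ideal. Qed.

Lemma ofM_shadowSu mu t y u q w :
  ofM (shadowSu Dx Ex mu t y u q w)
  = (2 * (1 - ofA mu%:A * ofA t) * Lx (ofA u) - ofA mu%:A * ofA y) * ofM q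
    - (1 - ofA mu%:A * ofA t) * Lx (Lx (ofM q)) + (1 - ofA mu%:A * ofA t) * ofM w.
Proof. by rewrite /shadowSu -[mu *: t]mulr_algl -[mu *: y]mulr_algl; push_into_ideal. Qed.

Lemma tangent_covering_compatible u q :
  equationTE Dt Dx Dy Et Ex Ey u q ->
  Ey (cov_x Dx Ex u q) = Ex (cov_y Dx Dy Et Ex Ey u q).
Proof.
move=> /lift_equationTE Hq; apply: ofM_inj.
rewrite -(lift_der_ofM Ey _ HDy) -(lift_der_ofM Ex _ HDx) ofM_cov_x ofM_cov_y.
exact: (covering_compatible (lift_derivation HDx HEx) (lift_derivation HDy HEy)
          (lift_commuting cXY mXY)).
Qed.

Lemma tangent_shadow_Su t y u q w mu :
  Dt t = 1 -> Dx t = 0 -> Dy t = 0 -> Dt y = 0 -> Dx y = 0 -> Dy y = 1 ->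
  equationE Dt Dx Dy u -> equationTE Dt Dx Dy Et Ex Ey u q ->
  Ex w = cov_x Dx Ex u q -> Ey w = cov_y Dx Dy Et Ex Ey u q ->
  lin_E Dx Dy Et Ex Ey u (shadowSu Dx Ex mu t y u q w) = 0.
Proof.
move=> Htt Hxt Hyt Hty Hxy Hyy /lift_equationE Hu /lift_equationTE Hq Hwx Hwy.
apply: ofM_inj; rewrite ofM_lin_E ofM_shadowSu.
apply: (shadow_Su (lift_derivation HDt HEt) (lift_derivation HDx HEx)
          (lift_derivation HDy HEy) (lift_commuting cTX mTX) (lift_commuting cXY mXY));
  rewrite ?(lift_der_ofA _ HEt, lift_der_ofA _ HEx, lift_der_ofA _ HEy)
          ?(derivation_scalar _ HDt, derivation_scalar _ HDx, derivation_scalar _ HDy)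
          ?(Htt, Hxt, Hyt, Hty, Hxy, Hyy) //.
- by rewrite (lift_der_ofM _ _ HDx) Hwx ofM_cov_x.
- by rewrite (lift_der_ofM _ _ HDy) Hwy ofM_cov_y.
Qed.

End Tangent.

Theorem proposition4 :
  (* compatibility of the covering system on TE *)
  (forall (R : realType) (A : comAlgType R) (M : lmodType A)
     (Dt Dx Dy : A -> A) (Et Ex Ey : M -> M) (u : A) (q : M),
     total_derivations Dt Dx Dy Et Ex Ey ->
     equationE Dt Dx Dy u -> equationTE Dt Dx Dy Et Ex Ey u q ->
     Ey (cov_x Dx Ex u q) = Ex (cov_y Dx Dy Et Ex Ey u q)) /\
  (* S^u is a shadow in the composite covering W -> E *)
  (forall (R : realType) (A : comAlgType R) (M : lmodType A)
     (Dt Dx Dy : A -> A) (Et Ex Ey : M -> M) (t y u : A) (q w : M) (mu : R),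
     total_derivations Dt Dx Dy Et Ex Ey ->
     Dt t = 1 -> Dx t = 0 -> Dy t = 0 ->
     Dt y = 0 -> Dx y = 0 -> Dy y = 1 ->
     equationE Dt Dx Dy u -> equationTE Dt Dx Dy Et Ex Ey u q ->
     Ex w = cov_x Dx Ex u q -> Ey w = cov_y Dx Dy Et Ex Ey u q ->
     lin_E Dx Dy Et Ex Ey u (shadowSu Dx Ex mu t y u q w) = 0).
Proof.
split=> R A M Dt Dx Dy Et Ex Ey.
  move=> u q [[HDt HDx HDy] [[HEt HEx HEy] [[cTX _ cXY] [mTX _ mXY]]]] _.
  exact: tangent_covering_compatible.
move=> t y u q w mu [[HDt HDx HDy] [[HEt HEx HEy] [[cTX _ cXY] [mTX _ mXY]]]].
exact: tangent_shadow_Su.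
Qed.
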